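(* Let $n\ge 1$ and let $h\in\mathrm{PR}\cap\mathscr{A}_0$. Then for any $p_1,\ldots,p_n\in\mathcal{P}_h$ and any $L\in\mathcal{L}$, the feedback interconnection $$y_i(s)=p_i(s)\big(e_i(s)-u_i(s)\big),\ i=1,\dots,n,\qquad u(s)=\tfrac{1}{s}L\,y(s)$$ is stable, i.e. $$\begin{bmatrix}P(s)\\ I\end{bmatrix}\Big(I+\tfrac{1}{s}L P(s)\Big)^{-1}\begin{bmatrix}\tfrac{1}{s}L & I\end{bmatrix}\in\mathscr{H}_\infty^{2n\times 2n},\qquad P(s)=\operatorname{diag}(p_1(s),\dots,p_n(s)).$$
   Context: $\mathscr{H}_\infty$ denotes the space of (scalar or matrix) functions analytic and bounded on the open right half plane $\mathbb{C}_+=\{s:\mathrm{Re}(s)>0\}$, with norm $\|g\|_\infty=\sup_{s\in\mathbb{C}_+}|g(s)|$. $\mathscr{A}_0$ denotes the subset of $\mathscr{H}_\infty$ consisting of functions that extend continuously to the extended imaginary axis $j\mathbb{R}\cup\{\infty\}$. A (not necessarily proper or rational) transfer function $g$ is positive real ($g\in\mathrm{PR}$) if (i) $g$ is analytic in $\mathrm{Re}(s)>0$; (ii) $g(s)$ is real for all positive real $s$; (iii) $\mathrm{Re}(g(s))\ge 0$ for all $\mathrm{Re}(s)>0$. $g$ is extended strictly positive real ($g\in\mathrm{ESPR}$) if in addition $g\in\mathscr{A}_0$ and there exists $\epsilon>0$ such that $g(s)-\epsilon$ is PR. For $h$ given, $\mathcal{P}_h:=\{p\in\mathscr{H}_\infty:\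 p(0)\neq 0,\ h(s)(1+p(s)/s)\in\mathrm{ESPR}\}$ (here $p(0)$ denotes the boundary value at $s=0$). $\mathcal{L}:=\{L\in\mathbb{R}^{n\times n}: L=L^T,\ 0\preceq L\preceq I\}$. *)

From Stdlib Require Import Reals.
Open Scope R_scope.

Definition Cx : Type := (R * R)%type.
Definition Re (z : Cx) : R := fst z.
Definition Im (z : Cx) : R := snd z.
Definition RtoC (x : R) : Cx := (x, 0).
Definition C0 : Cx := (0, 0).
Definition C1 : Cx := (1, 0).
Definition Cadd (a b : Cx) : Cx := (Re a + Re b, Im a + Im b).
Definition Copp (a : Cx) : Cx := (- Re a, - Im a).
Definition Csub (a b : Cx) : Cx := Cadd a (Copp b).
Definition Cmul (a b : Cx) : Cx :=
  (Re a * Re b - Im a * Im b, Re a * Im b + Im a * Re b).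
Definition Cinv (a : Cx) : Cx :=
  (Re a / (Re a ^ 2 + Im a ^ 2), - Im a / (Re a ^ 2 + Im a ^ 2)).
Definition Cdiv (a b : Cx) : Cx := Cmul a (Cinv b).
Definition Cabs (a : Cx) : R := sqrt (Re a ^ 2 + Im a ^ 2).

Fixpoint Csum (n : nat) (f : nat -> Cx) : Cx :=
  match n with
  | O => C0
  | S m => Cadd (Csum m f) (f m)
  end.

Definition Cdelta (i j : nat) : Cx := if Nat.eqb i j then C1 else C0.

Definition RHP (s : Cx) : Prop := 0 < Re s.

Definition analytic_RHP (f : Cx -> Cx) : Prop :=
  forall z, RHP z -> exists l : Cx,
    forall eps, 0 < eps -> exists delta, 0 < delta /\
      forall hh : Cx, 0 < Cabs hh -> Cabs hh < delta ->
        Cabs (Csub (Cdiv (Csub (f (Cadd z hh)) (f z)) hh) l) < eps.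

Definition Hinf (f : Cx -> Cx) : Prop :=
  analytic_RHP f /\ exists M : R, forall s, RHP s -> Cabs (f s) <= M.

Definition lim_RHP_at (f : Cx -> Cx) (z0 l : Cx) : Prop :=
  forall eps, 0 < eps -> exists delta, 0 < delta /\
    forall s, RHP s -> Cabs (Csub s z0) < delta -> Cabs (Csub (f s) l) < eps.

Definition lim_RHP_inf (f : Cx -> Cx) (l : Cx) : Prop :=
  forall eps, 0 < eps -> exists M : R,
    forall s, RHP s -> M < Cabs s -> Cabs (Csub (f s) l) < eps.

(** A_0: H_infinity functions extending continuously to jR ∪ {∞}
    (g w is the boundary value at j w, ginf the value at infinity) *)
Definition A0 (f : Cx -> Cx) : Prop :=
  Hinf f /\
  exists (g : R -> Cx) (ginf : Cx),
    (forall w : R, lim_RHP_at f (0, w) (g w)) /\ lim_RHP_inf f ginf.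

Definition PR (g : Cx -> Cx) : Prop :=
  analytic_RHP g /\
  (forall x : R, 0 < x -> Im (g (RtoC x)) = 0) /\
  (forall s, RHP s -> 0 <= Re (g s)).

Definition ESPR (g : Cx -> Cx) : Prop :=
  PR g /\ A0 g /\
  exists eps : R, 0 < eps /\ PR (fun s => Csub (g s) (RtoC eps)).

Definition boundary_value_at0_nonzero (p : Cx -> Cx) : Prop :=
  exists c : Cx, c <> C0 /\ lim_RHP_at p C0 c.

Definition Pclass (h p : Cx -> Cx) : Prop :=
  Hinf p /\ boundary_value_at0_nonzero p /\
  ESPR (fun s => Cmul (h s) (Cadd C1 (Cdiv (p s) s))).

Fixpoint Rsum (n : nat) (f : nat -> R) : R :=
  match n with
  | O => 0
  | S m => Rsum m f + f m
  end.

Definition quad (n : nat) (L : nat -> nat -> R) (x : nat -> R) : R :=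
  Rsum n (fun i => Rsum n (fun j => x i * L i j * x j)).

Definition Lclass (n : nat) (L : nat -> nat -> R) : Prop :=
  (forall i j, (i < n)%nat -> (j < n)%nat -> L i j = L j i) /\
  (forall x : nat -> R, 0 <= quad n L x) /\
  (forall x : nat -> R, quad n L x <= Rsum n (fun i => x i * x i)).

(** complex n×n matrices are functions nat -> nat -> Cx, entries with
    indices < n being significant *)

(** M(s) = I + (1/s) L P(s), with P(s) = diag(p_1(s),...,p_n(s)),
    0-indexed: p i is p_{i+1} *)
Definition loopM (n : nat) (p : nat -> Cx -> Cx) (L : nat -> nat -> R) (s : Cx)
  : nat -> nat -> Cx :=
  fun i j => Cadd (Cdelta i j) (Cdiv (Cmul (RtoC (L i j)) (p j s)) s).

Definition is_inverse (n : nat) (M X : nat -> nat -> Cx) : Prop :=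
  forall i j, (i < n)%nat -> (j < n)%nat ->
    Csum n (fun k => Cmul (M i k) (X k j)) = Cdelta i j /\
    Csum n (fun k => Cmul (X i k) (M k j)) = Cdelta i j.

(** [P; I] : 2n × n *)
Definition leftB (n : nat) (p : nat -> Cx -> Cx) (s : Cx) : nat -> nat -> Cx :=
  fun i k => if Nat.ltb i n then Cmul (Cdelta i k) (p i s) else Cdelta (i - n) k.

(** [ (1/s) L , I ] : n × 2n *)
Definition rightB (n : nat) (L : nat -> nat -> R) (s : Cx) : nat -> nat -> Cx :=
  fun k j => if Nat.ltb j n then Cdiv (RtoC (L k j)) s else Cdelta k (j - n).

(** entry (i,j) of [P;I] X [(1/s)L, I] *)
Definition closed_loop (n : nat) (p : nat -> Cx -> Cx) (L : nat -> nat -> R)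
  (X : nat -> nat -> Cx) (s : Cx) (i j : nat) : Cx :=
  Csum n (fun k => Csum n (fun l =>
    Cmul (Cmul (leftB n p s i k) (X k l)) (rightB n L s l j))).

Definition stable (n : nat) (p : nat -> Cx -> Cx) (L : nat -> nat -> R) : Prop :=
  exists Xinv : Cx -> nat -> nat -> Cx,
    (forall s, RHP s -> is_inverse n (loopM n p L s) (Xinv s)) /\
    (forall i j, (i < 2 * n)%nat -> (j < 2 * n)%nat ->
       Hinf (fun s => closed_loop n p L (Xinv s) s i j)).

(* With [g_i = h (1 + p_i / s)], the ESPR property gives [Re g_i >= eps] and [|g_i| <= Mg]
   uniformly, and [h] is bounded with [Re h >= 0].  For [M = I + L P / s] and [u = M v] one has
   [h u = h (I - L) v + L (g v)]; pairing this with [v] and with [g v] and using [0 <= L <= I]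
   yields [eps |v|^2 <= (Mg + sup |h|) sum_i |v_i| |u_i|] on the right half plane.  Hence [M]
   is invertible there, its inverse [X] is bounded by [(Mg + sup |h|) / eps], and [X] is
   analytic by the resolvent identity.  The closed-loop entries are built from [X], the [p_i]
   and [X L / s]; the last stays bounded as [s -> 0] because [p_j(0) <> 0]. *)

From Pilot Require Import Defs.
From Stdlib Require Import Reals Lra Lia Psatz IndefiniteDescription.
From mathcomp Require all_boot all_algebra complex Rstruct.

Module MatrixInverse.
Import all_boot all_algebra complex Rstruct.
Import GRing.Theory Num.Theory.
Local Open Scope ring_scope.

Definition to_complex (z : Cx) : Rdefinitions.R[i] := Complex (fst z) (snd z).
Definition of_complex (c : Rdefinitions.R[i]) : Cx := (complex.Re c, complex.Im c).

Lemma of_complexK c : to_complex (of_complex c) = c. Proof. by case: c. Qed.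
Lemma to_complexK z : of_complex (to_complex z) = z. Proof. by case: z. Qed.

Lemma to_complex_inj : injective to_complex.
Proof. exact: can_inj to_complexK. Qed.

Lemma to_complex_mul x y : to_complex (Cmul x y) = to_complex x * to_complex y.
Proof. by case: x => a b; case: y. Qed.

Lemma to_complex_Csum n f : to_complex (Csum n f) = \sum_(k < n) to_complex (f k).
Proof.
elim: n => [|n IH] /=; first by rewrite big_ord0.
by rewrite big_ord_recr /= -IH; case: (Csum n f); case: (f n).
Qed.

Lemma to_complex_Cdelta i j : to_complex (Cdelta i j) = (i == j)%:R.
Proof. by rewrite /Cdelta; case: PeanoNat.Nat.eqb_spec => [->|/eqP/negbTE->]; rewrite ?eqxx. Qed.

Lemma inverse_of_injective n (M : nat -> nat -> Cx) :
  (forall v : nat -> Cx,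
     (forall i, (i < n)%coq_nat -> Csum n (fun j => Cmul (M i j) (v j)) = Defs.C0) ->
     forall i, (i < n)%coq_nat -> v i = Defs.C0) ->
  exists X, is_inverse n M X.
Proof.
case: n => [|n] injM; first by exists M => i j /ltP.
pose A := \matrix_(i < n.+1, j < n.+1) to_complex (M i j).
have unitA : A \in unitmx.
  rewrite unitmxE unitfE -det_tr; apply/negP => /det0P [v nz_v vA0].
  pose w k := of_complex (v ord0 (inord k)).
  have w0 : forall i, (i < n.+1)%coq_nat -> w i = Defs.C0.
    apply: injM => i /ltP ltin; apply: to_complex_inj; rewrite to_complex_Csum.
    have := congr1 (fun m : 'rV_n.+1 => m ord0 (inord i)) vA0; rewrite !mxE => vAi.
    apply: etrans vAi.
    by apply: eq_bigr => k _; rewrite !mxE to_complex_mul of_complexK inordK // inord_val mulrC.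
  move/eqP: nz_v; apply; apply/rowP => k; rewrite mxE.
  by rewrite -(of_complexK (v ord0 k)) -(inord_val k) -/(w k) w0 //; apply/ltP.
exists (fun i j => of_complex (invmx A (inord i) (inord j))) => i j /ltP ltin /ltP ltjn.
have Edelta : Cdelta i j = of_complex ((1%:M : 'M_n.+1) (inord i) (inord j)).
  by rewrite mxE -(inj_eq val_inj) /= !inordK // -to_complex_Cdelta to_complexK.
split; rewrite Edelta; [rewrite -(mulmxV unitA) | rewrite -(mulVmx unitA)];
  rewrite mxE; apply: to_complex_inj; rewrite to_complex_Csum of_complexK;
  by apply: eq_bigr => k _; rewrite to_complex_mul of_complexK !mxE ?inordK ?inord_val.
Qed.
End MatrixInverse.

From Coquelicot Require Import Coquelicot.
Set Bullet Behavior "Strict Subproofs".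
Open Scope R_scope.

Ltac to_coquelicot :=
  try change Cadd with Cplus in *; try change Cmul with Cmult in *;
  try change Csub with Cminus in *; try change Defs.Copp with Copp in *;
  try change Defs.Cdiv with Cdiv in *; try change Defs.Cinv with Cinv in *;
  try change Cabs with Cmod in *; try change Defs.RtoC with RtoC in *;
  try change Defs.C0 with (RtoC 0) in *; try change Defs.C1 with (RtoC 1) in *;
  try change Defs.Re with (@fst R R) in *; try change Defs.Im with (@snd R R) in *;
  try change Cx with C in *.

(** * Finite sums *)

Lemma Csum_ext n f g : (forall i, (i < n)%nat -> f i = g i) -> Csum n f = Csum n g.
Proof.
induction n as [|n IH]; intros Hfg; simpl; [reflexivity|].
rewrite IH by (intros; apply Hfg; lia). rewrite Hfg by lia. reflexivity.
Qed.

Lemma Csum_plus n (f g : nat -> C) :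
  Csum n (fun i => f i + g i)%C = (Csum n f + Csum n g)%C.
Proof. induction n as [|n IH]; simpl; to_coquelicot; [|rewrite IH]; ring. Qed.

Lemma Csum_opp n (f : nat -> C) : Csum n (fun i => - f i)%C = (- Csum n f)%C.
Proof. induction n as [|n IH]; simpl; to_coquelicot; [|rewrite IH]; ring. Qed.

Lemma Csum_mult_l n (c : C) (f : nat -> C) : Csum n (fun i => c * f i)%C = (c * Csum n f)%C.
Proof. induction n as [|n IH]; simpl; to_coquelicot; [|rewrite IH]; ring. Qed.

Lemma Csum_mult_r n (c : C) (f : nat -> C) : Csum n (fun i => f i * c)%C = (Csum n f * c)%C.
Proof. induction n as [|n IH]; simpl; to_coquelicot; [|rewrite IH]; ring. Qed.

Lemma Csum_const0 n : Csum n (fun _ => RtoC 0) = RtoC 0.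
Proof. induction n as [|n IH]; simpl; to_coquelicot; [|rewrite IH]; ring. Qed.

Lemma Csum_swap n m (f : nat -> nat -> C) :
  Csum n (fun i => Csum m (fun j => f i j)) = Csum m (fun j => Csum n (fun i => f i j)).
Proof.
induction n as [|n IH]; simpl.
- symmetry. apply Csum_const0.
- rewrite IH, <- Csum_plus. reflexivity.
Qed.

Lemma Cdelta_sym i j : Cdelta i j = Cdelta j i.
Proof. unfold Cdelta. rewrite PeanoNat.Nat.eqb_sym. reflexivity. Qed.

Lemma Csum_Cdelta_l n j (f : nat -> C) :
  (j < n)%nat -> Csum n (fun i => Cdelta i j * f i)%C = f j.
Proof.
induction n as [|n IH]; intros Hj; simpl; to_coquelicot; [lia|].
unfold Cdelta at 2; destruct (PeanoNat.Nat.eqb_spec n j) as [<-|Hnj].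
- rewrite (Csum_ext n _ (fun _ => RtoC 0)), Csum_const0; [to_coquelicot; ring|].
  intros i Hi. unfold Cdelta. replace (Nat.eqb i n) with false by (symmetry; apply PeanoNat.Nat.eqb_neq; lia).
  to_coquelicot; ring.
- rewrite IH by lia. to_coquelicot; ring.
Qed.

Lemma Csum_Cdelta_r n j (f : nat -> C) :
  (j < n)%nat -> Csum n (fun i => f i * Cdelta i j)%C = f j.
Proof.
intros Hj. rewrite <- (Csum_Cdelta_l n j f Hj). apply Csum_ext. intros. to_coquelicot; ring.
Qed.

Lemma Cconj_Csum n f : Cconj (Csum n f) = Csum n (fun i => Cconj (f i)).
Proof.
induction n as [|n IH]; simpl; to_coquelicot.
- apply injective_projections; simpl; lra.
- rewrite Cplus_conj, IH. reflexivity.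
Qed.

Lemma Re_Csum n f : fst (Csum n f) = Rsum n (fun i => fst (f i)).
Proof. induction n as [|n IH]; simpl; [|rewrite <- IH]; reflexivity. Qed.

Lemma Im_Csum n f : snd (Csum n f) = Rsum n (fun i => snd (f i)).
Proof. induction n as [|n IH]; simpl; [|rewrite <- IH]; reflexivity. Qed.

Lemma Cmod_Csum n f : Cmod (Csum n f) <= Rsum n (fun i => Cmod (f i)).
Proof.
induction n as [|n IH]; simpl; to_coquelicot.
- rewrite Cmod_0. lra.
- eapply Rle_trans; [apply Cmod_triangle|]. lra.
Qed.

Lemma Rsum_ext n f g : (forall i, (i < n)%nat -> f i = g i) -> Rsum n f = Rsum n g.
Proof.
induction n as [|n IH]; intros Hfg; simpl; [reflexivity|].
rewrite IH by (intros; apply Hfg; lia). rewrite Hfg by lia. reflexivity.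
Qed.

Lemma Rsum_plus n f g : Rsum n (fun i => f i + g i) = Rsum n f + Rsum n g.
Proof. induction n as [|n IH]; simpl; [|rewrite IH]; ring. Qed.

Lemma Rsum_opp n f : Rsum n (fun i => - f i) = - Rsum n f.
Proof. induction n as [|n IH]; simpl; [|rewrite IH]; ring. Qed.

Lemma Rsum_mult_l n c f : Rsum n (fun i => c * f i) = c * Rsum n f.
Proof. induction n as [|n IH]; simpl; [|rewrite IH]; ring. Qed.

Lemma Rsum_const0 n : Rsum n (fun _ => 0) = 0.
Proof. induction n as [|n IH]; simpl; [|rewrite IH]; ring. Qed.

Lemma Rsum_swap n m f :
  Rsum n (fun i => Rsum m (fun j => f i j)) = Rsum m (fun j => Rsum n (fun i => f i j)).
Proof.
induction n as [|n IH]; simpl.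
- symmetry. apply Rsum_const0.
- rewrite IH, <- Rsum_plus. reflexivity.
Qed.

Lemma Rsum_le n f g : (forall i, (i < n)%nat -> f i <= g i) -> Rsum n f <= Rsum n g.
Proof.
induction n as [|n IH]; intros Hfg; simpl; [lra|].
assert (Rsum n f <= Rsum n g) by (apply IH; intros; apply Hfg; lia).
assert (f n <= g n) by (apply Hfg; lia). lra.
Qed.

Lemma Rsum_nonneg n f : (forall i, (i < n)%nat -> 0 <= f i) -> 0 <= Rsum n f.
Proof. intros Hf. rewrite <- (Rsum_const0 n). apply Rsum_le. exact Hf. Qed.

Lemma Rsum_ge_term n f j :
  (j < n)%nat -> (forall i, (i < n)%nat -> 0 <= f i) -> f j <= Rsum n f.
Proof.
induction n as [|n IH]; intros Hj Hf; simpl; [lia|].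
assert (0 <= Rsum n f) by (apply Rsum_nonneg; intros; apply Hf; lia).
destruct (PeanoNat.Nat.eq_dec j n) as [->|Hjn]; [lra|].
assert (f j <= Rsum n f) by (apply IH; [lia | intros; apply Hf; lia]).
assert (0 <= f n) by (apply Hf; lia). lra.
Qed.

(** * The coercivity estimate *)

Definition cdot n (a b : nat -> C) : C := Csum n (fun i => Cconj (a i) * b i)%C.

Definition Lmul n (L : nat -> nat -> R) (x : nat -> C) (i : nat) : C :=
  Csum n (fun j => RtoC (L i j) * x j)%C.

Lemma cdot_lincomb_r n a b b1 b2 b3 c1 c2 :
  (forall i, (i < n)%nat -> b i = c1 * b1 i - c2 * b2 i + b3 i)%C ->
  cdot n a b = (c1 * cdot n a b1 - c2 * cdot n a b2 + cdot n a b3)%C.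
Proof.
intros Hb. unfold cdot.
rewrite (Csum_ext n _ (fun i => c1 * (Cconj (a i) * b1 i) + - (c2 * (Cconj (a i) * b2 i))
                                + Cconj (a i) * b3 i))%C.
- rewrite !Csum_plus, Csum_opp, !Csum_mult_l. to_coquelicot; ring.
- intros i Hi. rewrite Hb by exact Hi. to_coquelicot; ring.
Qed.

Lemma cdot_scal_r n a b c : cdot n a (fun i => c * b i)%C = (c * cdot n a b)%C.
Proof. unfold cdot. rewrite <- Csum_mult_l. apply Csum_ext. intros. to_coquelicot; ring. Qed.

Lemma cdot_Lmul n L a x :
  cdot n a (Lmul n L x) =
  Csum n (fun i => Csum n (fun j => Cconj (a i) * (RtoC (L i j) * x j)))%C.
Proof. apply Csum_ext. intros. unfold Lmul. rewrite <- Csum_mult_l. reflexivity. Qed.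

Lemma Im_cdot_self n z : snd (cdot n z z) = 0.
Proof.
unfold cdot. rewrite Im_Csum, <- (Rsum_const0 n). apply Rsum_ext.
intros i _. destruct (z i); simpl. ring.
Qed.

Lemma Re_cdot_self n z :
  fst (cdot n z z) =
  Rsum n (fun i => fst (z i) * fst (z i)) + Rsum n (fun i => snd (z i) * snd (z i)).
Proof.
unfold cdot. rewrite Re_Csum, <- Rsum_plus. apply Rsum_ext.
intros i _. destruct (z i); simpl. ring.
Qed.

Section SymmetricForm.
Variables (n : nat) (L : nat -> nat -> R).
Hypothesis L_sym : forall i j, (i < n)%nat -> (j < n)%nat -> L i j = L j i.

Lemma cdot_Lmul_conj w v : cdot n w (Lmul n L v) = Cconj (cdot n v (Lmul n L w)).
Proof.
rewrite !cdot_Lmul, Cconj_Csum, Csum_swap. apply Csum_ext. intros j Hj.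
rewrite Cconj_Csum. apply Csum_ext. intros i Hi.
rewrite (L_sym i j) by assumption. rewrite !Cmult_conj, Cconj_conj.
apply injective_projections; simpl; ring.
Qed.

Lemma Im_cdot_Lmul_self z : snd (cdot n z (Lmul n L z)) = 0.
Proof.
rewrite cdot_Lmul, Im_Csum.
rewrite (Rsum_ext n _ (fun i => Rsum n (fun j => fst (z i) * L i j * snd (z j))
                                + - Rsum n (fun j => snd (z i) * L i j * fst (z j)))).
- rewrite Rsum_plus, Rsum_opp, (Rsum_swap n n (fun i j => snd (z i) * L i j * fst (z j))).
  rewrite (Rsum_ext n (fun j => Rsum n (fun i => snd (z i) * L i j * fst (z j)))
                      (fun j => Rsum n (fun i => fst (z j) * L j i * snd (z i)))); [ring|].
  intros j Hj. apply Rsum_ext. intros i Hi. rewrite L_sym by assumption. ring.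
- intros i Hi. rewrite Im_Csum, <- Rsum_opp, <- Rsum_plus. apply Rsum_ext.
  intros j Hj. destruct (z i), (z j); simpl. ring.
Qed.

Lemma Re_cdot_Lmul_self z :
  fst (cdot n z (Lmul n L z)) = quad n L (fun i => fst (z i)) + quad n L (fun i => snd (z i)).
Proof.
rewrite cdot_Lmul, Re_Csum. unfold quad. rewrite <- Rsum_plus. apply Rsum_ext.
intros i Hi. rewrite Re_Csum, <- Rsum_plus. apply Rsum_ext.
intros j Hj. destruct (z i), (z j); simpl. ring.
Qed.
End SymmetricForm.

Lemma Cmod_ge_Re z : fst z <= Cmod z.
Proof.
destruct z as [a b]. unfold Cmod; simpl. apply Rle_trans with (Rabs a); [apply Rle_abs|].
rewrite <- sqrt_Rsqr_abs. apply sqrt_le_1_alt. unfold Rsqr. nra.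
Qed.

(* Eliminating [c]: |h|^2 Re Wv = |h|^2 (Re W + Re (h V) - Re h * D) - Re h * E. *)
Lemma Re_le_of_identities (h V W Wv c D E : C) :
  snd D = 0 -> 0 <= fst D -> snd E = 0 -> 0 <= fst E -> 0 <= fst h -> h <> RtoC 0 ->
  (h * V = h * D + c)%C -> (h * W = h * Wv - h * Cconj c + E)%C ->
  fst Wv <= Cmod W + Cmod h * Cmod V.
Proof.
destruct h as [h1 h2], V as [v1 v2], W as [u1 u2], Wv as [w1 w2], c as [c1 c2],
  D as [d1 d2], E as [e1 e2]; simpl.
intros -> Hd -> He Hh Hnz E1 E2.
unfold Cmult, Cplus, Cminus, Copp, Cconj in E1, E2; simpl in E1, E2.
injection E1 as E1a E1b. injection E2 as E2a E2b.
assert (Hn : 0 < h1 * h1 + h2 * h2).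
{ destruct (Req_dec h1 0), (Req_dec h2 0); try nra. subst. contradiction Hnz. reflexivity. }
assert (Elim : (h1*h1 + h2*h2) * (w1 - u1 - (h1*v1 - h2*v2) + h1*d1) + h1*e1 = 0).
{ assert (Ec1 : c1 = h1*v1 - h2*v2 - h1*d1) by lra.
  assert (Comb : h1 * (h1*u1 - h2*u2) + h2 * (h1*u2 + h2*u1) =
    h1 * (h1*w1 - h2*w2 + - (h1*c1 - h2 * - c2) + e1) +
    h2 * (h1*w2 + h2*w1 + - (h1 * - c2 + h2*c1) + 0)) by (rewrite <- E2a, <- E2b; ring).
  rewrite Ec1 in Comb. lra. }
assert (u1 <= Cmod (u1, u2)) by apply (Cmod_ge_Re (u1, u2)).
assert (h1*v1 - h2*v2 <= Cmod (h1, h2) * Cmod (v1, v2)).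
{ rewrite <- Cmod_mult. apply (Cmod_ge_Re (Cmult (h1, h2) (v1, v2))). }
assert (w1 <= u1 + (h1*v1 - h2*v2)).
{ apply Rmult_le_reg_l with (h1*h1 + h2*h2); [exact Hn|].
  assert (0 <= (h1*h1 + h2*h2) * h1 * d1) by (apply Rmult_le_pos; [apply Rmult_le_pos|]; lra).
  assert (0 <= h1 * e1) by (apply Rmult_le_pos; lra). nra. }
lra.
Qed.

Definition mulmxv n (M : nat -> nat -> C) (v : nat -> C) (i : nat) : C :=
  Csum n (fun j => M i j * v j)%C.

Definition coercive n (M : nat -> nat -> C) (eps K : R) : Prop :=
  forall v, eps * Rsum n (fun i => Cmod (v i) ^ 2) <=
            K * Rsum n (fun i => Cmod (v i) * Cmod (mulmxv n M v i)).

Lemma coercive_ext n M M' eps K :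
  (forall i j, (i < n)%nat -> (j < n)%nat -> M i j = M' i j) ->
  coercive n M eps K -> coercive n M' eps K.
Proof.
intros HM HMc v. specialize (HMc v).
rewrite (Rsum_ext n (fun i => Cmod (v i) * Cmod (mulmxv n M' v i))
                    (fun i => Cmod (v i) * Cmod (mulmxv n M v i))); [exact HMc|].
intros i Hi. unfold mulmxv. rewrite (Csum_ext n _ (fun j => M i j * v j)%C); [reflexivity|].
intros j Hj. rewrite HM by assumption. reflexivity.
Qed.

Lemma Cmod_sqr z : Cmod z ^ 2 = fst z * fst z + snd z * snd z.
Proof. unfold Cmod. rewrite pow2_sqrt; [simpl; ring|]. destruct z; simpl; nra. Qed.

Lemma Cmod_cdot_le n a b :
  Cmod (cdot n a b) <= Rsum n (fun i => Cmod (a i) * Cmod (b i)).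
Proof.
eapply Rle_trans; [apply Cmod_Csum|]. apply Rsum_le. intros i _.
rewrite Cmod_mult, Cmod_conj. lra.
Qed.

Section Coercivity.
Variables (n : nat) (L : nat -> nat -> R) (h : C) (g q : nat -> C) (eps Mg Mh : R).
Hypothesis L_class : Lclass n L.
Hypothesis g_def : forall j, (j < n)%nat -> (h * (1 + q j))%C = g j.
Hypothesis Re_g_ge : forall j, (j < n)%nat -> eps <= fst (g j).
Hypothesis Cmod_g_le : forall j, (j < n)%nat -> Cmod (g j) <= Mg.
Hypothesis Cmod_h_le : Cmod h <= Mh.
Hypothesis Re_h_ge0 : 0 <= fst h.
Hypothesis h_neq0 : h <> RtoC 0.

Lemma I_plus_LQ_coercive :
  coercive n (fun i j => Cdelta i j + RtoC (L i j) * q j)%C eps (Mg + Mh).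
Proof.
destruct L_class as [L_sym [L_ge0 L_le1]].
intros v. set (u := mulmxv n _ v). set (w := fun i => (g i * v i)%C).
assert (hu : forall i, (i < n)%nat ->
          (h * u i = h * v i - h * Lmul n L v i + Lmul n L w i)%C).
{ intros i Hi. unfold u, mulmxv, Lmul. rewrite <- Csum_mult_l.
  rewrite (Csum_ext n _ (fun j => Cdelta j i * (h * v j)
             + (- (h * (RtoC (L i j) * v j)) + RtoC (L i j) * w j)))%C.
  - rewrite Csum_plus, Csum_Cdelta_l, Csum_plus, Csum_opp, Csum_mult_l by exact Hi.
    to_coquelicot; ring.
  - intros j Hj. unfold w. rewrite <- g_def, Cdelta_sym by exact Hj. to_coquelicot; ring. }
assert (Pair_v : (h * cdot n v u =
   h * (cdot n v v - cdot n v (Lmul n L v)) + cdot n v (Lmul n L w))%C).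
{ rewrite <- cdot_scal_r, (cdot_lincomb_r n v _ v (Lmul n L v) (Lmul n L w) h h) by exact hu.
  to_coquelicot; ring. }
assert (Pair_w : (h * cdot n w u =
   h * cdot n w v - h * Cconj (cdot n v (Lmul n L w)) + cdot n w (Lmul n L w))%C).
{ rewrite <- cdot_Lmul_conj by exact L_sym.
  rewrite <- cdot_scal_r. apply cdot_lincomb_r. exact hu. }
assert (Re_wv : fst (cdot n w v) <=
                Cmod (cdot n w u) + Cmod h * Cmod (cdot n v u)).
{ refine (Re_le_of_identities h _ _ _ _ _ _ _ _
           (Im_cdot_Lmul_self n L L_sym w) _ Re_h_ge0 h_neq0 Pair_v Pair_w).
  - simpl. rewrite Im_cdot_self, Im_cdot_Lmul_self by exact L_sym. ring.
  - simpl. rewrite Re_cdot_self, Re_cdot_Lmul_self by exact L_sym.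
    pose proof (L_le1 (fun i => fst (v i))). pose proof (L_le1 (fun i => snd (v i))). lra.
  - rewrite Re_cdot_Lmul_self by exact L_sym.
    pose proof (L_ge0 (fun i => fst (w i))). pose proof (L_ge0 (fun i => snd (w i))). lra. }
assert (eps * Rsum n (fun i => Cmod (v i) ^ 2) <= fst (cdot n w v)).
{ unfold cdot. rewrite Re_Csum, <- Rsum_mult_l. apply Rsum_le. intros i Hi.
  rewrite Cmod_sqr. unfold w. specialize (Re_g_ge i Hi).
  destruct (g i) as [g1 g2], (v i) as [a b]; simpl in *. nra. }
assert (Cmod (cdot n w u) <= Mg * Rsum n (fun i => Cmod (v i) * Cmod (u i))).
{ eapply Rle_trans; [apply Cmod_cdot_le|]. rewrite <- Rsum_mult_l. apply Rsum_le.
  intros i Hi. unfold w. rewrite Cmod_mult, Rmult_assoc. apply Rmult_le_compat_r.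
  - apply Rmult_le_pos; apply Cmod_ge_0.
  - exact (Cmod_g_le i Hi). }
assert (Cmod h * Cmod (cdot n v u) <= Mh * Rsum n (fun i => Cmod (v i) * Cmod (u i))).
{ apply Rmult_le_compat; [apply Cmod_ge_0 | apply Cmod_ge_0 | exact Cmod_h_le | apply Cmod_cdot_le]. }
lra.
Qed.
End Coercivity.

Lemma Rsum_mult_Cmod_Cdelta n j (f : nat -> R) :
  (j < n)%nat -> Rsum n (fun i => f i * Cmod (Cdelta i j)) = f j.
Proof.
induction n as [|n IH]; intros Hj; simpl; [lia|].
unfold Cdelta at 2. destruct (PeanoNat.Nat.eqb_spec n j) as [<-|Hnj]; to_coquelicot.
- rewrite (Rsum_ext n _ (fun _ => 0)), Rsum_const0; [rewrite Cmod_1; ring|].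
  intros i Hi. unfold Cdelta.
  replace (Nat.eqb i n) with false by (symmetry; apply PeanoNat.Nat.eqb_neq; lia).
  to_coquelicot. rewrite Cmod_0. ring.
- rewrite IH by lia. rewrite Cmod_0. ring.
Qed.

Section CoerciveMatrix.
Variables (n : nat) (M : nat -> nat -> C) (eps K : R).
Hypothesis eps_gt0 : 0 < eps.
Hypothesis M_coercive : coercive n M eps K.

Lemma coercive_injective v :
  (forall i, (i < n)%nat -> mulmxv n M v i = RtoC 0) -> forall i, (i < n)%nat -> v i = RtoC 0.
Proof.
intros Mv0 i Hi. specialize (M_coercive v).
rewrite (Rsum_ext n (fun k => Cmod (v k) * Cmod (mulmxv n M v k)) (fun _ => 0)), Rsum_const0
  in M_coercive by (intros k Hk; rewrite Mv0, Cmod_0 by exact Hk; ring).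
assert (Cmod (v i) ^ 2 <= Rsum n (fun k => Cmod (v k) ^ 2))
  by (apply (Rsum_ge_term n (fun k => Cmod (v k) ^ 2)); [exact Hi | intros; apply pow2_ge_0]).
assert (Rsum n (fun k => Cmod (v k) ^ 2) <= 0) by nra.
apply Cmod_eq_0, Rle_antisym; [nra | apply Cmod_ge_0].
Qed.

Lemma coercive_inverse_bound (X : nat -> nat -> C) :
  0 <= K ->
  (forall i j, (i < n)%nat -> (j < n)%nat -> mulmxv n M (fun k => X k j) i = Cdelta i j) ->
  forall i j, (i < n)%nat -> (j < n)%nat -> Cmod (X i j) <= K / eps.
Proof.
intros K_ge0 MX i j Hi Hj. set (v := fun k => X k j).
set (S := Rsum n (fun k => Cmod (v k) ^ 2)).
assert (S_le : eps * S <= K * Cmod (v j)).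
{ specialize (M_coercive v). fold S in M_coercive.
  rewrite (Rsum_ext n (fun k => Cmod (v k) * Cmod (mulmxv n M v k))
                      (fun k => Cmod (v k) * Cmod (Cdelta k j))) in M_coercive
    by (intros k Hk; unfold v; rewrite MX by assumption; reflexivity).
  rewrite Rsum_mult_Cmod_Cdelta in M_coercive by exact Hj. exact M_coercive. }
assert (term_le : forall k, (k < n)%nat -> Cmod (v k) ^ 2 <= S)
  by (intros k Hk; apply (Rsum_ge_term n (fun k => Cmod (v k) ^ 2)); [exact Hk | intros; apply pow2_ge_0]).
assert (KE : K = eps * (K / eps)) by (field; lra).
assert (vj_le : Cmod (v j) <= K / eps).
{ pose proof (term_le j Hj). pose proof (Cmod_ge_0 (v j)).
  destruct (Req_dec (Cmod (v j)) 0) as [->|Hnz]; [apply Rdiv_le_0_compat; lra|].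
  apply Rmult_le_reg_l with (eps * Cmod (v j)); [nra|]. nra. }
assert (S <= (K / eps) ^ 2).
{ apply Rmult_le_reg_l with eps; [exact eps_gt0|]. rewrite KE in S_le.
  pose proof (Cmod_ge_0 (v j)). assert (0 <= K / eps) by (apply Rdiv_le_0_compat; lra). nra. }
pose proof (term_le i Hi). pose proof (Cmod_ge_0 (v i)).
assert (0 <= K / eps) by (apply Rdiv_le_0_compat; lra). unfold v in *. nra.
Qed.
End CoerciveMatrix.

(** * Limits at 0 and complex derivatives *)

Lemma Rlt_Rmin_l a x y : a < Rmin x y -> a < x.
Proof. intros H. eapply Rlt_le_trans; [exact H | apply Rmin_l]. Qed.

Lemma Rlt_Rmin_r a x y : a < Rmin x y -> a < y.
Proof. intros H. eapply Rlt_le_trans; [exact H | apply Rmin_r]. Qed.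

Lemma Cmod_triangle_rev a b : Cmod a - Cmod (b - a)%C <= Cmod b.
Proof.
pose proof (Cmod_triangle (a - b)%C b).
replace (a - b + b)%C with a in H by (to_coquelicot; ring).
replace (a - b)%C with (- (b - a))%C in H by (to_coquelicot; ring).
rewrite Cmod_opp in H. lra.
Qed.

Lemma Cmod_gt0_neq0 k : 0 < Cmod k -> k <> RtoC 0.
Proof. intros H E. rewrite E, Cmod_0 in H. lra. Qed.

Definition lim0 (phi : C -> C) (l : C) : Prop :=
  forall eps, 0 < eps -> exists delta, 0 < delta /\
    forall k : C, 0 < Cmod k -> Cmod k < delta -> Cmod (phi k - l)%C < eps.

Definition is_Cderive (f : C -> C) (z l : C) : Prop :=
  lim0 (fun k => (f (z + k) - f z) / k)%C l.

Lemma lim0_const c : lim0 (fun _ => c) c.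
Proof.
intros eps Heps. exists 1. split; [lra|]. intros k _ _.
replace (c - c)%C with (RtoC 0) by (to_coquelicot; ring). rewrite Cmod_0. exact Heps.
Qed.

Lemma lim0_id : lim0 (fun k => k) (RtoC 0).
Proof.
intros eps Heps. exists eps. split; [exact Heps|]. intros k _ Hk.
replace (k - 0)%C with k by (to_coquelicot; ring). exact Hk.
Qed.

Lemma lim0_ext phi psi l r : 0 < r ->
  (forall k, 0 < Cmod k -> Cmod k < r -> phi k = psi k) -> lim0 phi l -> lim0 psi l.
Proof.
intros Hr Heq H eps Heps. destruct (H eps Heps) as [d [Hd Hk]].
exists (Rmin d r). split; [apply Rmin_pos; assumption|]. intros k H1 H2.
rewrite <- Heq by (eauto using Rlt_Rmin_r). apply Hk; eauto using Rlt_Rmin_l.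
Qed.

Lemma lim0_eq phi l l' : lim0 phi l -> l = l' -> lim0 phi l'.
Proof. intros H <-. exact H. Qed.

Lemma lim0_plus phi psi a b :
  lim0 phi a -> lim0 psi b -> lim0 (fun k => phi k + psi k)%C (a + b)%C.
Proof.
intros H1 H2 eps Heps.
destruct (H1 (eps / 2)) as [d1 [Hd1 K1]]; [lra|].
destruct (H2 (eps / 2)) as [d2 [Hd2 K2]]; [lra|].
exists (Rmin d1 d2). split; [apply Rmin_pos; assumption|]. intros k Hk Hkd.
specialize (K1 k Hk (Rlt_Rmin_l _ _ _ Hkd)). specialize (K2 k Hk (Rlt_Rmin_r _ _ _ Hkd)).
replace (phi k + psi k - (a + b))%C with ((phi k - a) + (psi k - b))%C by (to_coquelicot; ring).
eapply Rle_lt_trans; [apply Cmod_triangle | lra].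
Qed.

Lemma lim0_bound phi l : lim0 phi l ->
  exists r, 0 < r /\ forall k, 0 < Cmod k -> Cmod k < r -> Cmod (phi k) <= Cmod l + 1.
Proof.
intros H. destruct (H 1) as [d [Hd K]]; [lra|]. exists d. split; [exact Hd|].
intros k H1 H2. specialize (K k H1 H2).
replace (phi k) with ((phi k - l) + l)%C by (to_coquelicot; ring).
eapply Rle_trans; [apply Cmod_triangle | lra].
Qed.

Lemma lim0_mult phi psi a b :
  lim0 phi a -> lim0 psi b -> lim0 (fun k => phi k * psi k)%C (a * b)%C.
Proof.
intros H1 H2 eps Heps.
destruct (lim0_bound phi a H1) as [r [Hr Kr]].
pose proof (Cmod_ge_0 a). pose proof (Cmod_ge_0 b).
set (E := eps / (2 * (Cmod a + Cmod b + 2))).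
assert (HE : 0 < E) by (apply Rdiv_lt_0_compat; lra).
assert (E_eps : E * (2 * (Cmod a + Cmod b + 2)) = eps) by (unfold E; field; lra).
destruct (H1 E HE) as [d1 [Hd1 K1]]. destruct (H2 E HE) as [d2 [Hd2 K2]].
exists (Rmin r (Rmin d1 d2)). split; [repeat apply Rmin_pos; assumption|]. intros k Hk Hkd.
pose proof (Rlt_Rmin_r _ _ _ Hkd) as Hkd'.
specialize (K1 k Hk (Rlt_Rmin_l _ _ _ Hkd')). specialize (K2 k Hk (Rlt_Rmin_r _ _ _ Hkd')).
specialize (Kr k Hk (Rlt_Rmin_l _ _ _ Hkd)).
replace (phi k * psi k - a * b)%C with (phi k * (psi k - b) + (phi k - a) * b)%C
  by (to_coquelicot; ring).
eapply Rle_lt_trans; [apply Cmod_triangle|]. rewrite !Cmod_mult.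
pose proof (Cmod_ge_0 (phi k)). pose proof (Cmod_ge_0 (psi k - b)%C).
assert (Cmod (phi k) * Cmod (psi k - b)%C <= (Cmod a + 1) * E)
  by (apply Rmult_le_compat; lra).
assert (Cmod (phi k - a)%C * Cmod b <= E * Cmod b)
  by (apply Rmult_le_compat_r; lra).
nra.
Qed.

Lemma lim0_scal c phi l : lim0 phi l -> lim0 (fun k => c * phi k)%C (c * l)%C.
Proof. intros H. apply (lim0_mult (fun _ => c) phi); [apply lim0_const | exact H]. Qed.

Lemma lim0_opp phi l : lim0 phi l -> lim0 (fun k => - phi k)%C (- l)%C.
Proof.
intros H. apply (lim0_ext (fun k => RtoC (-1) * phi k)%C) with (r := 1); [lra | |].
- intros. to_coquelicot; ring.
- eapply lim0_eq; [apply lim0_scal, H | to_coquelicot; ring].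
Qed.

Lemma lim0_inv phi l : lim0 phi l -> l <> RtoC 0 -> lim0 (fun k => / phi k)%C (/ l)%C.
Proof.
intros H Hl eps Heps.
assert (Hm : 0 < Cmod l) by (apply Cmod_gt_0; exact Hl).
set (E := Rmin (Cmod l / 2) (eps * Cmod l * Cmod l / 2)).
assert (HE : 0 < E).
{ apply Rmin_pos; [lra|]. apply Rdiv_lt_0_compat; [|lra].
  repeat apply Rmult_lt_0_compat; assumption. }
destruct (H E HE) as [d [Hd K]]. exists d. split; [exact Hd|]. intros k H1 H2.
specialize (K k H1 H2).
assert (K1 : Cmod (phi k - l)%C < Cmod l / 2) by exact (Rlt_Rmin_l _ _ _ K).
assert (K2 : Cmod (phi k - l)%C < eps * Cmod l * Cmod l / 2) by exact (Rlt_Rmin_r _ _ _ K).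
assert (Hp : Cmod l / 2 <= Cmod (phi k)) by (pose proof (Cmod_triangle_rev l (phi k)); lra).
assert (Hpk : phi k <> RtoC 0) by (apply Cmod_gt0_neq0; lra).
replace (/ phi k - / l)%C with (- (phi k - l) / (phi k * l))%C
  by (to_coquelicot; field; split; assumption).
unfold Cdiv. rewrite Cmod_mult, Cmod_inv, Cmod_mult, Cmod_opp
  by (apply Cmult_neq_0; assumption).
apply Rmult_lt_reg_r with (Cmod (phi k) * Cmod l); [apply Rmult_lt_0_compat; lra|].
rewrite Rmult_assoc, Rinv_l by (apply Rgt_not_eq, Rmult_lt_0_compat; lra).
assert (Cmod l / 2 * Cmod l <= Cmod (phi k) * Cmod l) by (apply Rmult_le_compat_r; lra).
nra.
Qed.

Lemma lim0_Csum_exists n (phi : nat -> C -> C) :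
  (forall i, (i < n)%nat -> exists l, lim0 (phi i) l) ->
  exists l, lim0 (fun k => Csum n (fun i => phi i k)) l.
Proof.
induction n as [|n IH]; intros H; simpl; [eexists; apply lim0_const|].
destruct IH as [l1 H1]; [intros; apply H; lia|].
destruct (H n) as [l2 H2]; [lia|].
eexists. apply (lim0_plus (fun k => Csum n (fun i => phi i k)) (phi n)); eassumption.
Qed.

Lemma is_Cderive_continuous f z l :
  is_Cderive f z l -> lim0 (fun k => f (z + k)%C) (f z).
Proof.
intros H.
apply lim0_ext with (phi := fun k => (f z + k * ((f (z + k) - f z) / k))%C) (r := 1); [lra| |].
- intros k Hk _. to_coquelicot. field. apply Cmod_gt0_neq0, Hk.
- eapply lim0_eq.
  + apply (lim0_plus (fun _ => f z)); [apply lim0_const|].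
    apply (lim0_mult (fun k => k)); [apply lim0_id | exact H].
  + to_coquelicot; ring.
Qed.

Lemma is_Cderive_const c z : is_Cderive (fun _ => c) z (RtoC 0).
Proof.
apply lim0_ext with (phi := fun _ => RtoC 0) (r := 1); [lra | | apply lim0_const].
intros k Hk _. to_coquelicot. field. apply Cmod_gt0_neq0, Hk.
Qed.

Lemma is_Cderive_plus f g z a b :
  is_Cderive f z a -> is_Cderive g z b -> is_Cderive (fun s => f s + g s)%C z (a + b)%C.
Proof.
intros Hf Hg.
apply lim0_ext with (r := 1)
  (phi := fun k => ((f (z + k) - f z) / k + (g (z + k) - g z) / k)%C); [lra| |].
- intros k Hk _. to_coquelicot. field. apply Cmod_gt0_neq0, Hk.
- apply lim0_plus; assumption.
Qed.

Lemma is_Cderive_mult f g z a b :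
  is_Cderive f z a -> is_Cderive g z b ->
  is_Cderive (fun s => f s * g s)%C z (a * g z + f z * b)%C.
Proof.
intros Hf Hg.
apply lim0_ext with (r := 1) (phi := fun k =>
  ((f (z + k) - f z) / k * g (z + k) + f z * ((g (z + k) - g z) / k))%C); [lra| |].
- intros k Hk _. to_coquelicot. field. apply Cmod_gt0_neq0, Hk.
- apply lim0_plus.
  + apply (lim0_mult _ (fun k => g (z + k)%C)); [exact Hf | exact (is_Cderive_continuous g z b Hg)].
  + apply lim0_scal, Hg.
Qed.

Lemma is_Cderive_inv z : z <> RtoC 0 -> is_Cderive (fun s => / s)%C z (- (/ z * / z))%C.
Proof.
intros Hz. assert (Hm : 0 < Cmod z) by (apply Cmod_gt_0; exact Hz).
apply lim0_ext with (phi := fun k => (- / (z + k) * / z)%C) (r := Cmod z); [exact Hm| |].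
- intros k Hk Hkz. assert (Hzk : (z + k)%C <> RtoC 0).
  { intros E. pose proof (Cmod_triangle_rev z (z + k)%C) as T.
    replace (z + k - z)%C with k in T by (to_coquelicot; ring). rewrite E, Cmod_0 in T. lra. }
  pose proof (Cmod_gt0_neq0 k Hk). to_coquelicot. field. repeat split; assumption.
- replace (- (/ z * / z))%C with (- / z * / z)%C by (to_coquelicot; ring).
  apply (lim0_mult (fun k => - / (z + k))%C (fun _ => / z)%C); [|apply lim0_const].
  apply lim0_opp, (lim0_inv (fun k => z + k)%C); [|exact Hz].
  eapply lim0_eq; [apply (lim0_plus (fun _ => z)); [apply lim0_const | apply lim0_id]|].
  to_coquelicot; ring.
Qed.

Lemma Re_ge_neg_Cmod k : - Cmod k <= fst k.
Proof. pose proof (Cmod_ge_Re (- k)%C). rewrite Cmod_opp in H. simpl in H. lra. Qed.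

Lemma RHP_shift z k : RHP z -> Cmod k < fst z -> RHP (z + k)%C.
Proof. unfold RHP. intros Hz Hk. simpl. pose proof (Re_ge_neg_Cmod k). lra. Qed.

Lemma RHP_neq0 s : RHP s -> s <> RtoC 0.
Proof. unfold RHP. intros Hs E. rewrite E in Hs. simpl in Hs. lra. Qed.

Lemma is_Cderive_ext_RHP f g z l :
  RHP z -> (forall s, RHP s -> f s = g s) -> is_Cderive f z l -> is_Cderive g z l.
Proof.
intros Hz Hfg H.
apply lim0_ext with (phi := fun k => ((f (z + k) - f z) / k)%C) (r := fst z); [exact Hz| |exact H].
intros k _ Hk. rewrite !Hfg by (exact Hz || apply RHP_shift; assumption). reflexivity.
Qed.

Lemma analytic_RHP_const c : analytic_RHP (fun _ => c).
Proof. intros z _. exists (RtoC 0). exact (is_Cderive_const c z). Qed.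

Lemma analytic_RHP_plus f g :
  analytic_RHP f -> analytic_RHP g -> analytic_RHP (fun s => f s + g s)%C.
Proof.
intros Hf Hg z Hz. destruct (Hf z Hz) as [a Ha], (Hg z Hz) as [b Hb].
exists (a + b)%C. exact (is_Cderive_plus f g z a b Ha Hb).
Qed.

Lemma analytic_RHP_mult f g :
  analytic_RHP f -> analytic_RHP g -> analytic_RHP (fun s => f s * g s)%C.
Proof.
intros Hf Hg z Hz. destruct (Hf z Hz) as [a Ha], (Hg z Hz) as [b Hb].
exists (a * g z + f z * b)%C. exact (is_Cderive_mult f g z a b Ha Hb).
Qed.

Lemma analytic_RHP_inv : analytic_RHP (fun s => / s)%C.
Proof. intros z Hz. exists (- (/ z * / z))%C. exact (is_Cderive_inv z (RHP_neq0 z Hz)). Qed.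

Lemma analytic_RHP_Csum n (f : nat -> C -> C) :
  (forall i, (i < n)%nat -> analytic_RHP (f i)) -> analytic_RHP (fun s => Csum n (fun i => f i s)).
Proof.
induction n as [|n IH]; intros H; simpl; [apply analytic_RHP_const|].
apply (analytic_RHP_plus (fun s => Csum n (fun i => f i s)) (f n));
  [apply IH; intros; apply H | apply H]; lia.
Qed.

Lemma analytic_RHP_ext f g :
  analytic_RHP f -> (forall s, RHP s -> f s = g s) -> analytic_RHP g.
Proof.
intros Hf Hfg z Hz. destruct (Hf z Hz) as [l Hl].
exists l. exact (is_Cderive_ext_RHP f g z l Hz Hfg Hl).
Qed.

Lemma Hinf_const c : Hinf (fun _ => c).
Proof. split; [apply analytic_RHP_const|]. exists (Cabs c). intros; lra. Qed.

Lemma Hinf_plus f g : Hinf f -> Hinf g -> Hinf (fun s => f s + g s)%C.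
Proof.
intros [Af [Mf Bf]] [Ag [Mg Bg]]. split; [apply analytic_RHP_plus; assumption|].
exists (Mf + Mg). intros s Hs. specialize (Bf s Hs). specialize (Bg s Hs). to_coquelicot.
eapply Rle_trans; [apply Cmod_triangle | lra].
Qed.

Lemma Hinf_mult f g : Hinf f -> Hinf g -> Hinf (fun s => f s * g s)%C.
Proof.
intros [Af [Mf Bf]] [Ag [Mg Bg]]. split; [apply analytic_RHP_mult; assumption|].
exists (Rmax Mf 0 * Rmax Mg 0). intros s Hs. specialize (Bf s Hs). specialize (Bg s Hs).
to_coquelicot. rewrite Cmod_mult.
apply Rmult_le_compat; try apply Cmod_ge_0; eapply Rle_trans; eauto; apply Rmax_l.
Qed.

Lemma Hinf_Csum n (f : nat -> C -> C) :
  (forall i, (i < n)%nat -> Hinf (f i)) -> Hinf (fun s => Csum n (fun i => f i s)).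
Proof.
induction n as [|n IH]; intros H; simpl; [apply Hinf_const|].
apply (Hinf_plus (fun s => Csum n (fun i => f i s)) (f n)); [apply IH; intros; apply H | apply H]; lia.
Qed.

Lemma Hinf_ext f g : Hinf f -> (forall s, RHP s -> f s = g s) -> Hinf g.
Proof.
intros [Af [M Bf]] Hfg. split; [eapply analytic_RHP_ext; eassumption|].
exists M. intros s Hs. rewrite <- Hfg by exact Hs. apply Bf, Hs.
Qed.

(** * Analyticity of a bounded inverse *)

Lemma resolvent_identity n M1 X1 M0 X0 i j :
  is_inverse n M1 X1 -> is_inverse n M0 X0 -> (i < n)%nat -> (j < n)%nat ->
  (X1 i j - X0 i j)%C =
  Csum n (fun a => Csum n (fun b => X1 i a * (M0 a b - M1 a b) * X0 b j))%C.
Proof.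
intros H1 H0 Hi Hj.
rewrite (Csum_ext n _ (fun a => Csum n (fun b => X1 i a * M0 a b * X0 b j)
                               + - Csum n (fun b => X1 i a * M1 a b * X0 b j))%C)
  by (intros a Ha; rewrite <- Csum_opp, <- Csum_plus; apply Csum_ext; intros;
      to_coquelicot; ring).
rewrite Csum_plus, Csum_opp, (Csum_swap n n (fun a b => X1 i a * M1 a b * X0 b j)%C).
rewrite (Csum_ext n (fun a => Csum n (fun b => X1 i a * M0 a b * X0 b j))%C
                    (fun a => X1 i a * Cdelta a j)%C).
2:{ intros a Ha. rewrite <- (proj1 (H0 a j Ha Hj)), <- Csum_mult_l.
    apply Csum_ext. intros. to_coquelicot; ring. }
rewrite (Csum_ext n (fun b => Csum n (fun a => X1 i a * M1 a b * X0 b j))%C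
                    (fun b => Cdelta b i * X0 b j)%C).
2:{ intros b Hb. rewrite Cdelta_sym, <- (proj2 (H1 i b Hi Hb)), <- Csum_mult_r.
    apply Csum_ext. intros. to_coquelicot; ring. }
rewrite Csum_Cdelta_r, Csum_Cdelta_l by assumption. to_coquelicot; ring.
Qed.

Definition bounded_near0 (phi : C -> C) : Prop :=
  exists r B, 0 < r /\ forall k, 0 < Cmod k -> Cmod k < r -> Cmod (phi k) <= B.

Lemma bounded_near0_lim0 phi l : lim0 phi l -> bounded_near0 phi.
Proof. intros H. destruct (lim0_bound phi l H) as [r [Hr K]]. exists r, (Cmod l + 1). auto. Qed.

Lemma bounded_near0_const c : bounded_near0 (fun _ => c).
Proof. exists 1, (Cmod c). split; [lra|]. intros; lra. Qed.

Lemma bounded_near0_plus f g :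
  bounded_near0 f -> bounded_near0 g -> bounded_near0 (fun k => f k + g k)%C.
Proof.
intros [r1 [B1 [H1 K1]]] [r2 [B2 [H2 K2]]]. exists (Rmin r1 r2), (B1 + B2).
split; [apply Rmin_pos; assumption|]. intros k Hk Hkr.
specialize (K1 k Hk (Rlt_Rmin_l _ _ _ Hkr)). specialize (K2 k Hk (Rlt_Rmin_r _ _ _ Hkr)).
eapply Rle_trans; [apply Cmod_triangle | lra].
Qed.

Lemma bounded_near0_mult f g :
  bounded_near0 f -> bounded_near0 g -> bounded_near0 (fun k => f k * g k)%C.
Proof.
intros [r1 [B1 [H1 K1]]] [r2 [B2 [H2 K2]]]. exists (Rmin r1 r2), (B1 * B2).
split; [apply Rmin_pos; assumption|]. intros k Hk Hkr. rewrite Cmod_mult.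
apply Rmult_le_compat; [apply Cmod_ge_0 | apply Cmod_ge_0 | |].
- exact (K1 k Hk (Rlt_Rmin_l _ _ _ Hkr)).
- exact (K2 k Hk (Rlt_Rmin_r _ _ _ Hkr)).
Qed.

Lemma bounded_near0_Csum n (f : nat -> C -> C) :
  (forall i, (i < n)%nat -> bounded_near0 (f i)) ->
  bounded_near0 (fun k => Csum n (fun i => f i k)).
Proof.
induction n as [|n IH]; intros H; simpl; [apply bounded_near0_const|].
apply (bounded_near0_plus (fun k => Csum n (fun i => f i k)) (f n));
  [apply IH; intros; apply H | apply H]; lia.
Qed.

Lemma lim0_mult_id_bounded S : bounded_near0 S -> lim0 (fun k => k * S k)%C (RtoC 0).
Proof.
intros [r [B [Hr K]]] eps Heps.
assert (HB : 0 < Rabs B + 1) by (pose proof (Rabs_pos B); lra).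
exists (Rmin r (eps / (Rabs B + 1))). split.
{ apply Rmin_pos; [exact Hr | apply Rdiv_lt_0_compat; assumption]. }
intros k Hk Hkr. replace (k * S k - 0)%C with (k * S k)%C by (to_coquelicot; ring).
specialize (K k Hk (Rlt_Rmin_l _ _ _ Hkr)). pose proof (Rlt_Rmin_r _ _ _ Hkr) as Hke.
rewrite Cmod_mult. pose proof (Rle_abs B). pose proof (Cmod_ge_0 (S k)).
assert (Cmod k * (Rabs B + 1) < eps).
{ apply Rmult_lt_reg_r with (/ (Rabs B + 1)); [apply Rinv_0_lt_compat, HB|].
  rewrite Rmult_assoc, Rinv_r, Rmult_1_r by lra. exact Hke. }
nra.
Qed.

Section AnalyticInverse.
Variables (n : nat) (M X : C -> nat -> nat -> C) (K : R).
Hypothesis M_analytic :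
  forall a b, (a < n)%nat -> (b < n)%nat -> analytic_RHP (fun s => M s a b).
Hypothesis X_inverse : forall s, RHP s -> is_inverse n (M s) (X s).
Hypothesis X_bounded :
  forall s, RHP s -> forall i j, (i < n)%nat -> (j < n)%nat -> Cmod (X s i j) <= K.
Variable z : C.
Hypothesis z_RHP : RHP z.

Let slope a b k := ((M (z + k) a b - M z a b) / k)%C.

Let slope_lim a b : (a < n)%nat -> (b < n)%nat -> exists l, lim0 (slope a b) l.
Proof. intros Ha Hb. exact (M_analytic a b Ha Hb z z_RHP). Qed.

Lemma inverse_difference_quotient i j k :
  (i < n)%nat -> (j < n)%nat -> 0 < Cmod k -> Cmod k < fst z ->
  ((X (z + k) i j - X z i j) / k)%C =
  Csum n (fun a => Csum n (fun b => X (z + k) i a * - slope a b k * X z b j))%C.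
Proof.
intros Hi Hj Hk Hkz.
rewrite (resolvent_identity n (M (z + k)%C) (X (z + k)%C) (M z) (X z))
  by (auto using RHP_shift).
unfold Cdiv. rewrite <- Csum_mult_r. apply Csum_ext. intros a Ha.
rewrite <- Csum_mult_r. apply Csum_ext. intros b Hb.
unfold slope. pose proof (Cmod_gt0_neq0 k Hk). to_coquelicot. field. assumption.
Qed.

Lemma inverse_continuous i j :
  (i < n)%nat -> (j < n)%nat -> lim0 (fun k => X (z + k) i j)%C (X z i j).
Proof.
intros Hi Hj.
set (S := fun k => Csum n (fun a => Csum n (fun b => X (z + k) i a * - slope a b k * X z b j))%C).
assert (S_bounded : bounded_near0 S).
{ apply bounded_near0_Csum. intros a Ha. apply bounded_near0_Csum. intros b Hb.
  apply bounded_near0_mult; [apply bounded_near0_mult | apply bounded_near0_const].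
  - exists (fst z), K. split; [exact z_RHP|].
    intros k _ Hk. apply X_bounded; [apply RHP_shift|..]; assumption.
  - destruct (slope_lim a b Ha Hb) as [l Hl].
    exact (bounded_near0_lim0 _ _ (lim0_opp _ _ Hl)). }
apply lim0_ext with (phi := fun k => (X z i j + k * S k)%C) (r := fst z); [exact z_RHP| |].
- intros k Hk Hkz. unfold S. rewrite <- inverse_difference_quotient by assumption.
  pose proof (Cmod_gt0_neq0 k Hk). to_coquelicot. field. assumption.
- eapply lim0_eq.
  + apply (lim0_plus (fun _ => X z i j)); [apply lim0_const | apply lim0_mult_id_bounded, S_bounded].
  + to_coquelicot; ring.
Qed.

Lemma inverse_has_derivative i j :
  (i < n)%nat -> (j < n)%nat -> exists l, is_Cderive (fun s => X s i j) z l.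
Proof.
intros Hi Hj.
destruct (lim0_Csum_exists n (fun a k =>
            Csum n (fun b => X (z + k) i a * - slope a b k * X z b j))%C) as [l Hl].
{ intros a Ha. apply lim0_Csum_exists. intros b Hb.
  destruct (slope_lim a b Ha Hb) as [m Hm]. eexists.
  apply (lim0_mult (fun k => X (z + k) i a * - slope a b k)%C (fun _ => X z b j));
    [|apply lim0_const].
  apply (lim0_mult (fun k => X (z + k) i a)%C); [apply inverse_continuous; assumption|].
  exact (lim0_opp _ _ Hm). }
exists l. apply lim0_ext with (r := fst z) (phi := fun k =>
  Csum n (fun a => Csum n (fun b => X (z + k) i a * - slope a b k * X z b j))%C);
  [exact z_RHP | | exact Hl].
intros k Hk Hkz. symmetry. apply inverse_difference_quotient; assumption.
Qed.
End AnalyticInverse.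

Lemma bounded_inverse_Hinf n (M X : C -> nat -> nat -> C) (K : R) :
  (forall a b, (a < n)%nat -> (b < n)%nat -> analytic_RHP (fun s => M s a b)) ->
  (forall s, RHP s -> is_inverse n (M s) (X s)) ->
  (forall s, RHP s -> forall i j, (i < n)%nat -> (j < n)%nat -> Cmod (X s i j) <= K) ->
  forall i j, (i < n)%nat -> (j < n)%nat -> Hinf (fun s => X s i j).
Proof.
intros HM HX HK i j Hi Hj. split.
- intros z Hz. exact (inverse_has_derivative n M X K HM HX HK z Hz i j Hi Hj).
- exists K. intros s Hs. apply HK; assumption.
Qed.

(** * The closed loop *)

Lemma Cmod_Cdelta_le1 i j : Cmod (Cdelta i j) <= 1.
Proof. unfold Cdelta. destruct (Nat.eqb i j); to_coquelicot; [rewrite Cmod_1 | rewrite Cmod_0]; lra. Qed.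

Section ClosedLoop.
Variables (n : nat) (p : nat -> C -> C) (L : nat -> nat -> R) (X : C -> nat -> nat -> C) (K : R).
Hypothesis p_Hinf : forall i, (i < n)%nat -> Hinf (p i).
Hypothesis p_at0 : forall i, (i < n)%nat -> boundary_value_at0_nonzero (p i).
Hypothesis X_inverse : forall s, RHP s -> is_inverse n (loopM n p L s) (X s).
Hypothesis X_bounded :
  forall s, RHP s -> forall i j, (i < n)%nat -> (j < n)%nat -> Cmod (X s i j) <= K.

Lemma loopM_analytic a b : (a < n)%nat -> (b < n)%nat -> analytic_RHP (fun s => loopM n p L s a b).
Proof.
intros Ha Hb. apply analytic_RHP_plus; [apply analytic_RHP_const|].
apply analytic_RHP_mult; [|apply analytic_RHP_inv].
apply analytic_RHP_mult; [apply analytic_RHP_const | apply (p_Hinf b Hb)].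
Qed.

Lemma inverse_Hinf k l : (k < n)%nat -> (l < n)%nat -> Hinf (fun s => X s k l).
Proof. apply (bounded_inverse_Hinf n (loopM n p L) X K loopM_analytic X_inverse X_bounded). Qed.

Lemma p_mul_inverse_L_over_s s k j : RHP s -> (k < n)%nat -> (j < n)%nat ->
  (p j s * Csum n (fun l => X s k l * (RtoC (L l j) / s)))%C = (Cdelta k j - X s k j)%C.
Proof.
intros Hs Hk Hj. pose proof (proj2 (X_inverse s Hs k j Hk Hj)) as XM.
rewrite (Csum_ext n _ (fun l => X s k l * Cdelta l j + p j s * (X s k l * (RtoC (L l j) / s))))%C
  in XM by (intros l Hl; unfold loopM; to_coquelicot; unfold Cdiv; ring).
rewrite Csum_plus, Csum_Cdelta_r, Csum_mult_l in XM by exact Hj.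
to_coquelicot. rewrite <- XM. ring.
Qed.

(* The factor [1/s] is harmless away from [0]; near [0] it is compensated by [p_j(0) <> 0]
   through [p_mul_inverse_L_over_s]. *)
Lemma inverse_L_over_s_Hinf k j : (k < n)%nat -> (j < n)%nat ->
  Hinf (fun s => Csum n (fun l => X s k l * (RtoC (L l j) / s)))%C.
Proof.
intros Hk Hj. split.
{ apply analytic_RHP_Csum. intros l Hl. apply analytic_RHP_mult; [apply inverse_Hinf; assumption|].
  apply (analytic_RHP_mult (fun _ => RtoC (L l j)) (fun s => / s)%C);
    [apply analytic_RHP_const | apply analytic_RHP_inv]. }
destruct (p_at0 j Hj) as [c [c_neq0 p_lim]].
assert (Hc : 0 < Cmod c) by (apply Cmod_gt_0; exact c_neq0).
destruct (p_lim (Cmod c / 2)) as [d [Hd p_near]]; [lra|].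
exists (Rmax (2 * (1 + K) / Cmod c) (K * Rsum n (fun l => Rabs (L l j)) / d)).
intros s Hs. to_coquelicot. set (Y := Csum n (fun l => X s k l * (RtoC (L l j) / s))%C).
destruct (Rlt_le_dec (Cmod s) d) as [Hsd|Hsd].
- eapply Rle_trans; [|apply Rmax_l].
  assert (Cmod c / 2 <= Cmod (p j s)).
  { assert (Cmod (p j s - c)%C < Cmod c / 2).
    { apply p_near; [exact Hs|]. to_coquelicot.
      replace (s - RtoC 0)%C with s by (to_coquelicot; ring). exact Hsd. }
    pose proof (Cmod_triangle_rev c (p j s)). lra. }
  assert (Cmod (p j s) * Cmod Y <= 1 + K).
  { rewrite <- Cmod_mult. unfold Y. rewrite p_mul_inverse_L_over_s by assumption.
    eapply Rle_trans; [apply Cmod_triangle|]. rewrite Cmod_opp.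
    pose proof (Cmod_Cdelta_le1 k j). pose proof (X_bounded s Hs k j Hk Hj). lra. }
  assert (Cmod c / 2 * Cmod Y <= 1 + K).
  { eapply Rle_trans; [|eassumption]. apply Rmult_le_compat_r; [apply Cmod_ge_0 | assumption]. }
  apply Rmult_le_reg_l with (Cmod c / 2); [lra|].
  replace (Cmod c / 2 * (2 * (1 + K) / Cmod c)) with (1 + K) by (field; lra). assumption.
- eapply Rle_trans; [|apply Rmax_r].
  assert (Hs0 : 0 < Cmod s) by (apply Cmod_gt_0, RHP_neq0, Hs).
  unfold Y. eapply Rle_trans; [apply Cmod_Csum|].
  replace (K * Rsum n (fun l => Rabs (L l j)) / d) with (Rsum n (fun l => K * (Rabs (L l j) / d)))
    by (rewrite Rsum_mult_l; unfold Rdiv;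
        rewrite (Rsum_ext n _ (fun l => / d * Rabs (L l j))), Rsum_mult_l by (intros; ring);
        field; lra).
  apply Rsum_le. intros l Hl. rewrite Cmod_mult, Cmod_div, Cmod_R by apply RHP_neq0, Hs.
  apply Rmult_le_compat; [apply Cmod_ge_0 | | apply X_bounded; assumption |].
  + apply Rdiv_le_0_compat; [apply Rabs_pos | exact Hs0].
  + apply Rmult_le_compat_l; [apply Rabs_pos | apply Rinv_le_contravar; assumption].
Qed.

Lemma closed_loop_Hinf i j : Hinf (fun s => closed_loop n p L (X s) s i j).
Proof.
apply Hinf_ext with (f := fun s =>
  Csum n (fun k => leftB n p s i k * Csum n (fun l => X s k l * rightB n L s l j))%C).
2:{ intros s _. unfold closed_loop. apply Csum_ext. intros k Hk.
    rewrite <- Csum_mult_l. apply Csum_ext. intros. to_coquelicot; ring. }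
apply Hinf_Csum. intros k Hk.
apply (Hinf_mult (fun s => leftB n p s i k)).
- unfold leftB. destruct (PeanoNat.Nat.ltb_spec i n) as [Hin|Hin].
  + apply (Hinf_mult (fun _ => Cdelta i k) (p i)); [apply Hinf_const | apply p_Hinf, Hin].
  + apply Hinf_const.
- unfold rightB. destruct (PeanoNat.Nat.ltb_spec j n) as [Hjn|Hjn].
  + apply inverse_L_over_s_Hinf; assumption.
  + apply Hinf_Csum. intros l Hl.
    apply (Hinf_mult (fun s => X s k l)); [apply inverse_Hinf; assumption | apply Hinf_const].
Qed.
End ClosedLoop.

Lemma ESPR_uniform_bounds n (g : nat -> C -> C) :
  (forall i, (i < n)%nat -> ESPR (g i)) ->
  exists eps Mg, 0 < eps /\
    forall i, (i < n)%nat -> forall s, RHP s -> eps <= fst (g i s) /\ Cmod (g i s) <= Mg.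
Proof.
induction n as [|n IH]; intros H.
- exists 1, 0. split; [lra | intros; lia].
- destruct IH as [e1 [M1 [He1 H1]]]; [intros; apply H; lia|].
  destruct (H n) as [_ [[[_ [M2 HM2]] _] [e2 [He2 [_ [_ Hre2]]]]]]; [lia|].
  exists (Rmin e1 e2), (Rmax M1 M2). split; [apply Rmin_pos; assumption|].
  intros i Hi s Hs. destruct (PeanoNat.Nat.eq_dec i n) as [->|Hin].
  + specialize (Hre2 s Hs). change (0 <= fst (g n s) + - e2) in Hre2.
    pose proof (Rmin_r e1 e2). pose proof (Rmax_r M1 M2). specialize (HM2 s Hs).
    to_coquelicot. split; lra.
  + destruct (H1 i ltac:(lia) s Hs). pose proof (Rmin_l e1 e2). pose proof (Rmax_l M1 M2).
    split; lra.
Qed.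

Lemma coercive_inverse_family n (M : C -> nat -> nat -> C) eps K :
  0 < eps -> (forall s, RHP s -> coercive n (M s) eps K) ->
  exists X, forall s, RHP s -> is_inverse n (M s) (X s).
Proof.
intros Heps HM.
assert (Hex : forall s, exists X, RHP s -> is_inverse n (M s) X).
{ intros s. destruct (Rlt_dec 0 (fst s)) as [Hs|Hs].
  - destruct (MatrixInverse.inverse_of_injective n (M s)) as [X HX].
    + exact (coercive_injective n (M s) eps K Heps (HM s Hs)).
    + exists X. intros _. exact HX.
  - exists (M s). intros Hs'. contradiction. }
destruct (functional_choice _ Hex) as [X HX]. exists X. intros s Hs. exact (HX s Hs).
Qed.

Lemma loopM_coercive n p L (h : C -> C) eps Mg Mh s :
  Lclass n L -> RHP s -> Cmod (h s) <= Mh -> 0 <= fst (h s) -> h s <> RtoC 0 ->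
  (forall j, (j < n)%nat ->
     eps <= fst (h s * (1 + p j s / s))%C /\ Cmod (h s * (1 + p j s / s))%C <= Mg) ->
  coercive n (loopM n p L s) eps (Mg + Mh).
Proof.
intros L_class Hs h_le Re_h h_neq0 g_bounds.
apply coercive_ext with (M := fun i j => (Cdelta i j + RtoC (L i j) * (p j s / s))%C).
{ intros i j _ _. unfold loopM. to_coquelicot. unfold Cdiv. ring. }
apply (I_plus_LQ_coercive n L (h s) (fun j => h s * (1 + p j s / s))%C);
  try assumption; intros j Hj; [reflexivity | apply g_bounds, Hj | apply g_bounds, Hj].
Qed.

Theorem theorem1 :
  forall (n : nat), (1 <= n)%nat ->
  forall h : Cx -> Cx, PR h -> A0 h ->
  forall p : nat -> Cx -> Cx, (forall i, (i < n)%nat -> Pclass h (p i)) ->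
  forall L : nat -> nat -> R, Lclass n L ->
  stable n p L.
Proof.
intros n Hn h h_PR h_A0 p p_class L L_class.
destruct (ESPR_uniform_bounds n (fun i s => h s * (1 + p i s / s))%C)
  as [eps [Mg [eps_gt0 g_bounds]]]; [intros i Hi; apply (p_class i Hi)|].
destruct h_A0 as [[_ [Mh h_bound]] _].
destruct h_PR as [_ [_ Re_h_ge0]].
assert (h_neq0 : forall s, RHP s -> h s <> RtoC 0).
{ intros s Hs E. destruct (g_bounds 0%nat ltac:(lia) s Hs) as [Hg _].
  rewrite E in Hg. simpl in Hg. lra. }
assert (K_ge0 : 0 <= Mg + Mh).
{ destruct (g_bounds 0%nat ltac:(lia) (RtoC 1) Rlt_0_1) as [_ Hg].
  pose proof (h_bound (RtoC 1) Rlt_0_1). pose proof (Cmod_ge_0 (h (RtoC 1))).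
  pose proof (Cmod_ge_0 (h (RtoC 1) * (1 + p 0%nat (RtoC 1) / RtoC 1))%C).
  to_coquelicot. lra. }
assert (loop_coercive : forall s, RHP s -> coercive n (loopM n p L s) eps (Mg + Mh))
  by (intros s Hs; apply loopM_coercive with h; auto).
destruct (coercive_inverse_family n (loopM n p L) eps (Mg + Mh) eps_gt0 loop_coercive)
  as [X X_inverse].
exists X. split; [exact X_inverse|]. intros i j _ _.
apply (closed_loop_Hinf n p L X ((Mg + Mh) / eps));
  [intros k Hk; apply p_class, Hk.. | exact X_inverse |].
intros s Hs. apply (coercive_inverse_bound n _ eps _ eps_gt0 (loop_coercive s Hs) _ K_ge0).
intros k l Hk Hl. apply (X_inverse s Hs k l Hk Hl).
Qed.
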